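(* Let $u^m\in\mathbb{P}^{\mathrm{disc}}_0(\mathcal{T}_h)$ and $v^m\in\mathbb{P}^{\mathrm{cont}}_1(\mathcal{T}_h)$ be given and let $(v^{m+1},u^{m+1},\mu_\varepsilon^{m+1})$ be any solution of the fully discrete scheme (Step 1 and Step 2 described in the context). Then $$a^{upw}_h(\mu_\varepsilon^{m+1};(u^{m+1})_\oplus,\mu_\varepsilon^{m+1})\ge 0,$$ and consequently the scheme is unconditionally energy stable: $$E_\varepsilon(u^{m+1},v^{m+1})\le E_\varepsilon(u^m,v^m),$$ where $E_\varepsilon(u,v)=\int_\Omega\Big(k_0(u+\varepsilon)\log(u+\varepsilon)-k_1uv+\frac{k_1k_2}{2k_4}|\nabla v|^2+\frac{k_1k_3}{2k_4}v^2\Big)$.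
   Context: Let $\Omega\subset\mathbb{R}^2$ be a bounded polygonal domain and $\mathcal{T}_h$ a shape-regular triangular mesh of $\overline\Omega$ of size $h$. $\mathcal{E}_h^i$ denotes the set of interior edges. For an interior edge $e=\partial K\cap\partial L$ the two adjacent triangles are labelled $K,L$ so that the unit normal $\mathbf{n}_e$ points from $K$ to $L$; for a function $w$, $w_K,w_L$ are its traces from $K$ and $L$ and the jump is $[\![w]\!]=w_K-w_L$. $C_K$ denotes the barycenter of $K$, and $\mathcal{D}_e=|C_K-C_L|$ for $e=K\cap L\in\mathcal{E}_h^i$. The mesh is assumed to satisfy: (H1) for every interior edge $e=K\cap L$, the segment joining $C_K$ and $C_L$ is orthogonal to $e$; (H2) every angle of every triangle of $\mathcal{T}_h$ is at most $\pi/2$. $\mathbb{P}^{\mathrm{disc}}_0(\mathcal{T}_h)$ is the space of piecewise constant functions on $\mathcal{T}_h$, $\mathbb{P}^{\mathrm{cont}}_1(\mathcal{T}_h)$ the space of continuous piecewise linear functions, and $\Pi_0$ the $L^2(\Omega)$-orthogonal projection onto $\mathbb{P}^{\mathrm{disc}}_0(\mathcal{T}_h)$. For a scalar $w$, $w_\oplus=\max\{w,0\}$, $w_\ominus=-\min\{w,0\}$. $(\cdot,\cdot)$ is the $L^2(\Omega)$ inner product and $(f,g)_h=\int_\Omega I_h(fg)$ the mass-lumped inner product, $I_h$ being the nodal $\mathbb{P}_1$ interpolant. The upwind form is $$a^{upw}_h(\mu;u,\bar u)=\int_\Omega(\nabla\mu\cdot\nabla\bar u)\,u+\sum_{e\in\mathcal{E}_h^i,\,e=K\cap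 L}\frac{1}{\mathcal{D}_e}\int_e\Big(([\![\Pi_0\mu]\!])_\oplus u_K-([\![\Pi_0\mu]\!])_\ominus u_L\Big)[\![\bar u]\!].$$ Parameters: $k_0,\dots,k_4>0$, $\tau\in\{0,1\}$, time step $\Delta t>0$, $\varepsilon>0$; $\delta_t w^{m+1}=(w^{m+1}-w^m)/\Delta t$. The scheme: Step 1: find $v^{m+1}\in\mathbb{P}^{\mathrm{cont}}_1(\mathcal{T}_h)$ with $\tau(\delta_t v^{m+1},\bar v)_h+k_2(\nabla v^{m+1},\nabla\bar v)+k_3(v^{m+1},\bar v)_h-k_4(u^m,\bar v)=0$ for all $\bar v\in\mathbb{P}^{\mathrm{cont}}_1(\mathcal{T}_h)$. Step 2: find $(u^{m+1},\mu_\varepsilon^{m+1})\in\mathbb{P}^{\mathrm{disc}}_0(\mathcal{T}_h)^2$ with $u^{m+1}+\varepsilon>0$ such that $(\delta_t u^{m+1},\bar u)+a^{upw}_h(\mu_\varepsilon^{m+1};(u^{m+1})_\oplus,\bar u)=0$ and $(\mu_\varepsilon^{m+1},\bar\mu)-k_0(\log(u^{m+1}+\varepsilon),\bar\mu)+k_1(v^{m+1},\bar\mu)=0$ for all $\bar u,\bar\mu\in\mathbb{P}^{\mathrm{disc}}_0(\mathcal{T}_h)$. (It is assumed $u^m+\varepsilon>0$ so that $E_\varepsilon(u^m,v^m)$ is defined.) *)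

From HB Require Import structures.
From mathcomp Require Import all_boot all_order all_algebra.
From mathcomp Require Import reals exp.

Set Implicit Arguments.
Unset Strict Implicit.
Unset Printing Implicit Defensive.

Import Order.TTheory GRing.Theory Num.Theory.
Local Open Scope ring_scope.

(*   P0^disc(T_h) = functions T -> R (value on each triangle);              *)
(*   P1^cont(T_h) = functions V -> R (nodal values; on a conforming mesh a   *)
(*                  continuous piecewise linear function is determined by,   *)
(*                  and determines, its nodal values).                       *)
(* All integrals below are the exact integrals of the (piecewise polynomial) *)
(* integrands, computed triangle by triangle.                               *)

Section Mesh.
Variables (R : realType) (V T : finType) (x : V -> R * R) (vtx : T -> 'I_3 -> V).

Definition dot (p q : R * R) : R := p.1 * q.1 + p.2 * q.2.
Definition vsub (p q : R * R) : R * R := (p.1 - q.1, p.2 - q.2).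
Definition dist (p q : R * R) : R := Num.sqrt (dot (vsub p q) (vsub p q)).

Definition i0 : 'I_3 := @Ordinal 3 0 isT.
Definition i1 : 'I_3 := @Ordinal 3 1 isT.
Definition i2 : 'I_3 := @Ordinal 3 2 isT.

Definition det2 (K : T) : R :=
  let p0 := x (vtx K i0) in let p1 := x (vtx K i1) in let p2 := x (vtx K i2) in
  (vsub p1 p0).1 * (vsub p2 p0).2 - (vsub p2 p0).1 * (vsub p1 p0).2.

Definition area (K : T) : R := `|det2 K| / 2.

Definition bary (K : T) : R * R :=
  ((\sum_(i < 3) (x (vtx K i)).1) / 3, (\sum_(i < 3) (x (vtx K i)).2) / 3).

Definition in_open_tri (K : T) (p : R * R) : Prop :=
  exists lam : 'I_3 -> R, (forall i, 0 < lam i) /\ \sum_(i < 3) lam i = 1 /\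
    p = (\sum_(i < 3) lam i * (x (vtx K i)).1, \sum_(i < 3) lam i * (x (vtx K i)).2).
Definition in_closed_tri (K : T) (p : R * R) : Prop :=
  exists lam : 'I_3 -> R, (forall i, 0 <= lam i) /\ \sum_(i < 3) lam i = 1 /\
    p = (\sum_(i < 3) lam i * (x (vtx K i)).1, \sum_(i < 3) lam i * (x (vtx K i)).2).

(* Conforming triangulation (of the polygon Omega = union of the triangles): *)
Definition conforming_mesh : Prop :=
  injective x /\
  (forall K, det2 K != 0) /\
  (forall a : V, exists K i, vtx K i = a) /\
  (forall K L p, K != L -> ~ (in_open_tri K p /\ in_open_tri L p)) /\
  (forall K (a : V), in_closed_tri K (x a) -> exists i, vtx K i = a).

Definition verts (K : T) : {set V} := [set vtx K i | i : 'I_3].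
Definition common (K L : T) : {set V} := verts K :&: verts L.

Definition adj (K L : T) : bool := (K != L) && (#|common K L| == 2)%N.

(* |e| for e = K ∩ L : distance between the two common vertices *)
Definition edge_len (K L : T) : R :=
  \big[Num.max/0]_(a in common K L) \big[Num.max/0]_(b in common K L) dist (x a) (x b).

Definition De (K L : T) : R := dist (bary K) (bary L).

Definition H1 : Prop :=
  forall K L, adj K L -> forall a b, a \in common K L -> b \in common K L ->
    dot (vsub (bary K) (bary L)) (vsub (x a) (x b)) = 0.

(* (H2): every angle <= pi/2, i.e. its cosine is nonnegative *)
Definition H2 : Prop :=
  forall K (i j k : 'I_3), i != j -> i != k -> j != k ->
    0 <= dot (vsub (x (vtx K j)) (x (vtx K i))) (vsub (x (vtx K k)) (x (vtx K i))).

(* mean of a P1 function on K = (1/|K|) \int_K v *)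
Definition meanP1 (v : V -> R) (K : T) : R := (\sum_(i < 3) v (vtx K i)) / 3.

Definition gradP1 (v : V -> R) (K : T) : R * R :=
  let p0 := x (vtx K i0) in let p1 := x (vtx K i1) in let p2 := x (vtx K i2) in
  let d1 := v (vtx K i1) - v (vtx K i0) in let d2 := v (vtx K i2) - v (vtx K i0) in
  ((d1 * (vsub p2 p0).2 - d2 * (vsub p1 p0).2) / det2 K,
   (d2 * (vsub p1 p0).1 - d1 * (vsub p2 p0).1) / det2 K).

Definition ip00 (u w : T -> R) : R := \sum_K area K * u K * w K.
Definition ip01 (u : T -> R) (v : V -> R) : R := \sum_K area K * u K * meanP1 v K.
Definition ipgrad (v w : V -> R) : R := \sum_K area K * dot (gradP1 v K) (gradP1 w K).
(* mass-lumped (v, w)_h = \int I_h(v w) for v, w in P1 *)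
Definition iph (v w : V -> R) : R :=
  \sum_K area K / 3 * \sum_(i < 3) v (vtx K i) * w (vtx K i).

Definition posp (w : R) : R := Num.max w 0.
Definition negp (w : R) : R := - Num.min w 0.

(* a^upw_h(mu; u, ubar) for mu, u, ubar in P0.  Pi_0 mu = mu and the broken   *)
(* gradients of P0 functions vanish, so only the interior-edge sum remains.  *)
(* Each interior edge e = K ∩ L is counted once, with the labelling (K, L)   *)
(* fixed by the enumeration order of T.                                      *)
Definition a_upw (mu u ub : T -> R) : R :=
  \sum_K \sum_(L | adj K L && (enum_rank K < enum_rank L)%N)
    edge_len K L / De K L *
      (posp (mu K - mu L) * u K - negp (mu K - mu L) * u L) * (ub K - ub L).

Definition energy (k0 k1 k2 k3 k4 eps : R) (u : T -> R) (v : V -> R) : R :=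
  \sum_K area K * (k0 * ((u K + eps) * ln (u K + eps)) - k1 * u K * meanP1 v K)
  + k1 * k2 / (2 * k4) * ipgrad v v
  + k1 * k3 / (2 * k4) * iph v v.

Definition step1 (k2 k3 k4 tau dt : R) (um : T -> R) (vm vp : V -> R) : Prop :=
  forall vb : V -> R,
    tau * iph (fun a => (vp a - vm a) / dt) vb + k2 * ipgrad vp vb
    + k3 * iph vp vb - k4 * ip01 um vb = 0.

Definition step2 (k0 k1 dt eps : R) (um : T -> R) (vp : V -> R) (up mup : T -> R) : Prop :=
  (forall K, 0 < up K + eps) /\
  (forall ub : T -> R,
     ip00 (fun K => (up K - um K) / dt) ub + a_upw mup (fun K => posp (up K)) ub = 0) /\
  (forall mub : T -> R,
     ip00 mup mub - k0 * ip00 (fun K => ln (up K + eps)) mub + k1 * ip01 mub vp = 0).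

End Mesh.

From Pilot Require Import Defs.
From HB Require Import structures.
From mathcomp Require Import all_boot all_order all_algebra.
From mathcomp Require Import reals exp.
From mathcomp Require Import ring lra.
Import Order.TTheory GRing.Theory Num.Theory.
Local Open Scope ring_scope.

(** Each interior-edge term of [a_upw(mu; u, mu)] is [(d_+ u_K - d_- u_L) d]
    with [d = mu_K - mu_L], which is nonnegative for [u >= 0]; no mesh
    hypothesis is needed.  For the
    energy, test the transport equation with [mu] and with [1] (mass
    conservation), the chemical-potential equation with [(u^{m+1} - u^m)/dt]
    and Step 1 with [v^{m+1} - v^m].  Convexity of [s ln s] bounds the
    entropy increment by [(ln (u^{m+1} + eps) + 1, u^{m+1} - u^m)], and the
    identity [2 b(f, f - g) = b(f, f) - b(g, g) + b(f - g, f - g)] for the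
    two quadratic forms of Step 1 leaves only nonpositive dissipation terms. *)

Lemma upwind_flux_ge0 (R : realType) (d a b : R) :
  0 <= a -> 0 <= b -> 0 <= (posp d * a - negp d * b) * d.
Proof. by rewrite /posp /negp => a0 b0; case: (leP 0 d) => hd; nra. Qed.

Lemma xlnx_tangent_le {R : realType} {s t : R} : 0 < s -> 0 < t ->
  s * ln s + (ln s + 1) * (t - s) <= t * ln t.
Proof.
move=> s0 t0.
have : ln (1 + (s / t - 1)) <= s / t - 1.
  by apply: le_ln1Dx; rewrite ltrBrDr addrC subrr divr_gt0.
rewrite addrC subrK ln_div ?posrE // => ln_le.
have : t * (ln s - ln t) <= t * (s / t - 1) by rewrite ler_pM2l.
have -> : t * (s / t - 1) = s - t by field; rewrite gt_eqF.
lra.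
Qed.

Section Scheme.
Context {R : realType} {V T : finType} (x : V -> R * R) (vtx : T -> 'I_3 -> V).

Local Notation area := (area x vtx).
Local Notation a_upw := (a_upw x vtx).
Local Notation ip00 := (ip00 x vtx).
Local Notation ip01 := (ip01 x vtx).
Local Notation ipgrad := (ipgrad x vtx).
Local Notation iph := (iph x vtx).

Definition entropy (eps : R) (u : T -> R) : R :=
  \sum_K area K * ((u K + eps) * ln (u K + eps)).

Lemma area_ge0 K : 0 <= area K.
Proof. by rewrite /area divr_ge0. Qed.

Lemma edge_len_ge0 K L : 0 <= edge_len x vtx K L.
Proof.
apply: (big_ind (fun y => 0 <= y)) => // [a b ha _|a _].
  by rewrite le_max ha.
apply: (big_ind (fun y => 0 <= y)) => // [c d hc _|b _].
  by rewrite le_max hc.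
exact: sqrtr_ge0.
Qed.

Lemma De_ge0 K L : 0 <= De x vtx K L.
Proof. exact: sqrtr_ge0. Qed.

Lemma a_upw_ge0 (mu u : T -> R) : (forall K, 0 <= u K) -> 0 <= a_upw mu u mu.
Proof.
move=> u0; apply: sumr_ge0 => K _; apply: sumr_ge0 => L _; rewrite -mulrA.
by rewrite mulr_ge0 ?divr_ge0 ?edge_len_ge0 ?De_ge0 ?upwind_flux_ge0.
Qed.

Lemma a_upw_cst (mu u : T -> R) (c : R) : a_upw mu u (fun=> c) = 0.
Proof.
rewrite /Defs.a_upw big1 // => K _.
by rewrite big1 // => L _; rewrite subrr mulr0.
Qed.

Lemma ip00C (u w : T -> R) : ip00 u w = ip00 w u.
Proof. by apply: eq_bigr => K _; rewrite mulrAC. Qed.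

Lemma ip00Zl (c : R) (u w : T -> R) : ip00 (fun K => u K * c) w = c * ip00 u w.
Proof. by rewrite mulr_sumr; apply: eq_bigr => K _; ring. Qed.

Lemma ip01Zl (c : R) (u : T -> R) (v : V -> R) :
  ip01 (fun K => u K * c) v = c * ip01 u v.
Proof. by rewrite mulr_sumr; apply: eq_bigr => K _; ring. Qed.

Lemma ip01B (u w : T -> R) (v z : V -> R) :
  ip01 u v - ip01 w z = ip01 (fun K => u K - w K) v + ip01 w (fun a => v a - z a).
Proof.
rewrite /ip01 -sumrB -big_split /=; apply: eq_bigr => K _.
by rewrite /meanP1 sumrB; ring.
Qed.

Lemma iphZl (c : R) (f g : V -> R) : iph (fun a => f a * c) g = c * iph f g.
Proof.
rewrite mulr_sumr; apply: eq_bigr => K _.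
by rewrite !big_ord_recr !big_ord0 /=; ring.
Qed.

Lemma ipgrad_ge0 (f : V -> R) : 0 <= ipgrad f f.
Proof.
apply: sumr_ge0 => K _; rewrite mulr_ge0 ?area_ge0 // /dot.
by rewrite addr_ge0 // -expr2 sqr_ge0.
Qed.

Lemma iph_ge0 (f : V -> R) : 0 <= iph f f.
Proof.
apply: sumr_ge0 => K _; rewrite mulr_ge0 ?divr_ge0 ?area_ge0 //.
by apply: sumr_ge0 => i _; rewrite -expr2 sqr_ge0.
Qed.

Lemma ipgrad_polar (f g : V -> R) :
  2 * ipgrad f (fun a => f a - g a) =
  ipgrad f f - ipgrad g g + ipgrad (fun a => f a - g a) (fun a => f a - g a).
Proof.
rewrite mulr_sumr -sumrB -big_split /=; apply: eq_bigr => K _.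
by rewrite /gradP1 /dot /=; ring.
Qed.

Lemma iph_polar (f g : V -> R) :
  2 * iph f (fun a => f a - g a) =
  iph f f - iph g g + iph (fun a => f a - g a) (fun a => f a - g a).
Proof.
rewrite mulr_sumr -sumrB -big_split /=; apply: eq_bigr => K _.
by rewrite !big_ord_recr !big_ord0 /=; ring.
Qed.

Lemma entropyB_le {eps : R} {u w : T -> R} :
    (forall K, 0 < u K + eps) -> (forall K, 0 < w K + eps) ->
  entropy eps u - entropy eps w <=
    ip00 (fun K => ln (u K + eps)) (fun K => u K - w K)
    + ip00 (fun=> 1) (fun K => u K - w K).
Proof.
move=> u0 w0; rewrite -sumrB -big_split /=; apply: ler_sum => K _.
have := xlnx_tangent_le (u0 K) (w0 K).
have -> : w K + eps - (u K + eps) = - (u K - w K) by ring.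
have := area_ge0 K; nra.
Qed.

Lemma energyE (k0 k1 k2 k3 k4 eps : R) (u : T -> R) (v : V -> R) :
  energy x vtx k0 k1 k2 k3 k4 eps u v =
    k0 * entropy eps u - k1 * ip01 u v
    + k1 * k2 / (2 * k4) * ipgrad v v + k1 * k3 / (2 * k4) * iph v v.
Proof.
rewrite /energy /entropy /ip01 !mulr_sumr -sumrB.
by congr (_ + _ + _); apply: eq_bigr => K _; ring.
Qed.

Section Step2.
Context {k0 k1 dt eps : R} {um : T -> R} {vp : V -> R} {up mup : T -> R}.
Hypotheses (hk0 : 0 <= k0) (hdt : 0 < dt) (hum : forall K, 0 < um K + eps).
Hypothesis hstep2 : step2 x vtx k0 k1 dt eps um vp up mup.

Let du K := up K - um K.

Lemma step2_mass : ip00 (fun=> 1) du = 0.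
Proof.
have [_ [transport _]] := hstep2.
have := transport (fun=> 1); rewrite a_upw_cst addr0 ip00Zl.
by rewrite ip00C => /eqP; rewrite mulf_eq0 invr_eq0 gt_eqF //= => /eqP.
Qed.

Lemma step2_entropy_le :
  k0 * (entropy eps up - entropy eps um) - k1 * ip01 du vp <=
    - (dt * a_upw mup (fun K => posp (up K)) mup).
Proof.
have [hup [transport potential]] := hstep2.
have dt0 : dt != 0 by rewrite gt_eqF.
have test_mu := transport mup; have test_du := potential (fun K => du K / dt).
rewrite ip00Zl in test_mu.
rewrite ip00C ip00Zl [ip00 _ (fun K => _ / dt)]ip00C ip00Zl ip01Zl in test_du.
have h_mu : ip00 du mup = - (dt * a_upw mup (fun K => posp (up K)) mup).
  by apply: (mulfI (invr_neq0 dt0)); rewrite mulrN mulrA mulVf // mul1r; lra.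
have h_du : ip00 du mup - k0 * ip00 du (fun K => ln (up K + eps))
             + k1 * ip01 du vp = 0.
  apply: (mulfI (invr_neq0 dt0)); rewrite mulr0 -test_du; ring.
have hS := entropyB_le hup hum; rewrite step2_mass addr0 ip00C in hS.
have := ler_wpM2l hk0 hS; lra.
Qed.

End Step2.

Lemma step1_energy_le {k2 k3 k4 tau dt : R} {um : T -> R} {vm vp : V -> R} :
    0 <= k2 -> 0 <= k3 -> 0 <= tau -> 0 < dt ->
    step1 x vtx k2 k3 k4 tau dt um vm vp ->
  k2 * (ipgrad vp vp - ipgrad vm vm) + k3 * (iph vp vp - iph vm vm) <=
    2 * k4 * ip01 um (fun a => vp a - vm a).
Proof.
move=> k2_0 k3_0 tau0; rewrite -invr_gt0 => dt0 /(_ (fun a => vp a - vm a)).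
rewrite iphZl => test_dv.
have := ipgrad_polar vp vm; have := iph_polar vp vm.
have := mulr_ge0 k2_0 (ipgrad_ge0 (fun a => vp a - vm a)).
have := mulr_ge0 k3_0 (iph_ge0 (fun a => vp a - vm a)).
have := mulr_ge0 tau0 (mulr_ge0 (ltW dt0) (iph_ge0 (fun a => vp a - vm a))).
nra.
Qed.

End Scheme.

Theorem mainTheorem5 (R : realType) (V T : finType) (x : V -> R * R)
    (vtx : T -> 'I_3 -> V)
    (hmesh : conforming_mesh x vtx) (hH1 : H1 x vtx) (hH2 : H2 x vtx)
    (k0 k1 k2 k3 k4 tau dt eps : R)
    (hk0 : 0 < k0) (hk1 : 0 < k1) (hk2 : 0 < k2) (hk3 : 0 < k3) (hk4 : 0 < k4)
    (htau : tau = 0 \/ tau = 1) (hdt : 0 < dt) (heps : 0 < eps)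
    (um : T -> R) (vm : V -> R) (hum : forall K, 0 < um K + eps)
    (vp : V -> R) (up mup : T -> R)
    (hstep1 : step1 x vtx k2 k3 k4 tau dt um vm vp)
    (hstep2 : step2 x vtx k0 k1 dt eps um vp up mup) :
  0 <= a_upw x vtx mup (fun K => posp (up K)) mup /\
  energy x vtx k0 k1 k2 k3 k4 eps up vp <= energy x vtx k0 k1 k2 k3 k4 eps um vm.
Proof.
have a_ge0 : 0 <= a_upw x vtx mup (fun K => posp (up K)) mup.
  by apply: a_upw_ge0 => K; rewrite le_max lexx orbT.
split=> //; rewrite !energyE -subr_le0.
have hu := step2_entropy_le x vtx (ltW hk0) hdt hum hstep2.
have tau0 : 0 <= tau by case: htau => ->.
have hv := step1_energy_le x vtx (ltW hk2) (ltW hk3) tau0 hdt hstep1.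
set c := k1 / (2 * k4).
have c_ge0 : 0 <= c by rewrite divr_ge0 ?mulr_ge0 ?ltW.
have c2k4 : c * (2 * k4) = k1 by rewrite divfK // mulf_neq0 ?gt_eqF.
rewrite ![k1 * _ / _]mulrAC -/c.
have := ler_wpM2l c_ge0 hv; rewrite mulrA c2k4.
rewrite -[ip01 x vtx up vp](subrK (ip01 x vtx um vm)) ip01B.
have := mulr_ge0 (ltW hdt) a_ge0.
lra.
Qed.
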